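(* If a wave $(u,v,P,\eta,d)\in\mathcal W$ satisfies $u_x<0$ in $\Omega^+\cup S^+$, then $\max_{\overline\Omega}|v/u|<1$.
   Context: Fix constants $g>0$, $L>0$ and $P_{\mathrm{atm}}\in\mathbb R$. A wave is a 5-tuple $(u,v,P,\eta,d)$ with $d>0$, $\eta\in C^4$ $2L$-periodic with mean zero, and $u,v,P\in C^3(\overline\Omega)$ $2L$-periodic in $x$, where $\Omega=\{(x,y): -L<x<L,\ -d<y<\eta(x)\}$ (extended periodically), with $u,P,\eta$ even in $x$ and $v$ odd in $x$, satisfying $uu_x+vu_y=-P_x$, $uv_x+vv_y=-P_y-g$, $u_x+v_y=0$ in $\{-d<y<\eta(x)\}$; $P=P_{\mathrm{atm}}$ and $v=\eta_x u$ on $y=\eta(x)$; $v=0$ on $y=-d$. It is assumed that $\sup_\Omega u<0$. Then there is a stream function $\psi$ with $\psi_y=u$, $\psi_x=-v$, $\psi=0$ on the free surface and $\psi=m>0$ on $y=-d$, and a vorticity function $\gamma\in C^2[0,m]$ with $v_x-u_y=\gamma(\psi)$; it is assumed that $\gamma\le0$, $\gamma'\le0$, $\gamma''\le0$ on $(0,m)$. A wave is trivial if $u,v,\eta,P$ depend only on $y$. Let $\Omega^+=\{0<x<L,\ -d<y<\eta(x)\}$, $S^+=\{(x,\eta(x)):0<x<L\}$. A wave is monotone if $v>0$ in $\Omega^+\cup S^+$. $\mathcal W$ is the set of all such waves that are either monotone or trivial. *)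

From Stdlib Require Import Reals.
From Coquelicot Require Import Coquelicot.
Open Scope R_scope.

Definition dom (eta : R -> R) (d : R) (x y : R) : Prop := -d < y < eta x.
Definition domc (eta : R -> R) (d : R) (x y : R) : Prop := -d <= y <= eta x.

Definition cont_on2 (S : R -> R -> Prop) (f : R -> R -> R) : Prop :=
  forall x y, S x y -> forall eps, 0 < eps -> exists delta, 0 < delta /\
    forall x' y', S x' y' -> Rabs (x' - x) < delta -> Rabs (y' - y) < delta ->
      Rabs (f x' y' - f x y) < eps.

Definition px (f : R -> R -> R) (x y : R) : R := Derive (fun t => f t y) x.
Definition py (f : R -> R -> R) (x y : R) : R := Derive (fun t => f x t) y.

(* f in C^n(closure of D): f continuous on the closure Dc, partial derivatives
   exist in the open set D and extend (together with their own derivatives up to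
   order n) continuously to Dc. *)
Fixpoint Ck_cl (n : nat) (D Dc : R -> R -> Prop) (f : R -> R -> R) : Prop :=
  cont_on2 Dc f /\
  match n with
  | O => True
  | S m =>
      (forall x y, D x y -> ex_derive (fun t => f t y) x /\ ex_derive (fun t => f x t) y) /\
      exists fx fy : R -> R -> R,
        (forall x y, D x y -> fx x y = px f x y /\ fy x y = py f x y) /\
        Ck_cl m D Dc fx /\ Ck_cl m D Dc fy
  end.

Definition cont_on1 (S : R -> Prop) (f : R -> R) : Prop :=
  forall s, S s -> forall eps, 0 < eps -> exists delta, 0 < delta /\
    forall t, S t -> Rabs (t - s) < delta -> Rabs (f t - f s) < eps.

Fixpoint Ck_int (n : nat) (a b : R) (f : R -> R) : Prop :=
  cont_on1 (fun s => a <= s <= b) f /\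
  match n with
  | O => True
  | S m =>
      (forall s, a < s < b -> ex_derive f s) /\
      exists g : R -> R, (forall s, a < s < b -> g s = Derive f s) /\ Ck_int m a b g
  end.

Definition Ck_R (n : nat) (f : R -> R) : Prop :=
  forall k, (k <= n)%nat -> forall x, ex_derive_n f k x /\ continuous (Derive_n f k) x.

(* A wave (u,v,P,eta,d) with the standing assumptions (sup u < 0 and the
   vorticity-function assumptions). *)
Definition is_wave (g L Patm : R) (u v P : R -> R -> R) (eta : R -> R) (d : R) : Prop :=
  0 < d /\
  (forall x, -d < eta x) /\
  Ck_R 4 eta /\
  (forall x, eta (x + 2 * L) = eta x) /\
  RInt eta (- L) L = 0 /\
  (forall x, eta (- x) = eta x) /\
  Ck_cl 3 (dom eta d) (domc eta d) u /\
  Ck_cl 3 (dom eta d) (domc eta d) v /\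
  Ck_cl 3 (dom eta d) (domc eta d) P /\
  (forall x y, domc eta d x y ->
     u (x + 2 * L) y = u x y /\ v (x + 2 * L) y = v x y /\ P (x + 2 * L) y = P x y) /\
  (forall x y, domc eta d x y ->
     u (- x) y = u x y /\ P (- x) y = P x y /\ v (- x) y = - v x y) /\
  (forall x y, dom eta d x y ->
     u x y * px u x y + v x y * py u x y = - px P x y /\
     u x y * px v x y + v x y * py v x y = - py P x y - g /\
     px u x y + py v x y = 0) /\
  (forall x, P x (eta x) = Patm /\ v x (eta x) = Derive eta x * u x (eta x)) /\
  (forall x, v x (- d) = 0) /\
  (exists c, c < 0 /\ forall x y, dom eta d x y -> u x y <= c) /\
  (exists (psi : R -> R -> R) (m : R) (gam : R -> R),
     0 < m /\
     cont_on2 (domc eta d) psi /\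
     (forall x y, dom eta d x y ->
        is_derive (fun t => psi x t) y (u x y) /\
        is_derive (fun t => psi t y) x (- v x y)) /\
     (forall x, psi x (eta x) = 0 /\ psi x (- d) = m) /\
     Ck_int 2 0 m gam /\
     (forall x y, dom eta d x y -> px v x y - py u x y = gam (psi x y)) /\
     (forall s, 0 < s < m ->
        gam s <= 0 /\ Derive gam s <= 0 /\ Derive (Derive gam) s <= 0)).

(* Monotone: v > 0 in Omega^+ union S^+. *)
Definition monotone_wave (L : R) (v : R -> R -> R) (eta : R -> R) (d : R) : Prop :=
  forall x y, 0 < x < L -> -d < y <= eta x -> 0 < v x y.

Definition trivial_wave (u v P : R -> R -> R) (eta : R -> R) (d : R) : Prop :=
  (forall x1 x2, eta x1 = eta x2) /\
  (forall x1 x2 y, domc eta d x1 y -> domc eta d x2 y ->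
     u x1 y = u x2 y /\ v x1 y = v x2 y /\ P x1 y = P x2 y).

Definition in_W (g L Patm : R) (u v P : R -> R -> R) (eta : R -> R) (d : R) : Prop :=
  is_wave g L Patm u v P eta d /\ (monotone_wave L v eta d \/ trivial_wave u v P eta d).

From Stdlib Require Import Reals Lra Psatz.
From Coquelicot Require Import Coquelicot.
From mathcomp Require ssreflect ssrfun ssrbool ssralg classical_sets interval set_interval
  topology normedtype derive Rstruct Rstruct_topology.

(* On the half cell [0 <= x <= L] we have [v >= 0] (the wave is monotone or trivial) and
   [u < 0], so there [|v/u| < 1] amounts to [u + v < 0].  Consider a maximum point of [u + v]
   on the compact half cell.  On [x = 0], [x = L] and the bed, [v = 0] by symmetry and the
   boundary condition, so [u + v = u < 0].  An interior maximum is impossible: there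
   [grad (u + v) = 0], which together with [u_x + v_y = 0] makes the vorticity
   [v_x - u_y = -2 u_x] positive.  On the free surface the tangential derivative of [u + v]
   vanishes; combined with Bernoulli's law [P = P_atm], the Euler equations, the kinematic
   condition [v = eta' u], [u_x < 0] and [gamma <= 0], this forces [u + v < 0].  Hence
   [max |v/u| < 1] on the half cell, and by evenness and periodicity this is the maximum over
   the whole fluid domain. *)

Open Scope R_scope.

Module RectangleEVT.
Import ssreflect ssrfun ssrbool ssralg classical_sets interval set_interval topology normedtype
  derive Rstruct Rstruct_topology.
Import numFieldNormedType.Exports.
Local Open Scope classical_set_scope.
Local Open Scope R_scope.

Lemma cont_on2_rect_max (a b c e : R) (H : R -> R -> R) : a <= b -> c <= e ->
  cont_on2 (fun x t => a <= x <= b /\ c <= t <= e) H ->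
  exists x0 t0, (a <= x0 <= b /\ c <= t0 <= e) /\
    forall x t, a <= x <= b /\ c <= t <= e -> H x t <= H x0 t0.
Proof.
move=> ab ce hc.
pose A := (`[a, b] `*` `[c, e])%classic : set (R * R).
have inA (p : R * R) : A p <-> (a <= p.1 <= b) /\ (c <= p.2 <= e).
  case: p => x t; rewrite /A /= !in_itv /=; split.
    by move=> [/andP [/RleP ? /RleP ?] /andP [/RleP ? /RleP ?]].
  by move=> [[? ?] [? ?]]; split; apply/andP; split; apply/RleP.
have cA : compact A by apply: compact_setX; apply: segment_compact.
have A0 : (A !=set0)%classic by exists (a, c); apply/inA => /=; lra.
have cf : {within A, continuous (fun p : R * R => H p.1 p.2)}.
  apply/subspace_continuousP => -[x t] /inA /= hxt.
  apply: (proj2 (@cvgrPdist_lt _ R^o _ _ _ _ _)) => eps /RltP eps0.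
  have [del [del0 hd]] := hc x t hxt eps eps0.
  apply/nbhs_ballP; exists del => /=; first by apply/RltP.
  move=> [x' t'] [/= /RltP b1 /RltP b2] /inA /= hxt'.
  apply/RltP; change (Rabs (H x t - H x' t') < eps); rewrite -Rabs_Ropp Ropp_minus_distr.
  by apply: hd; rewrite // -Rabs_Ropp Ropp_minus_distr.
have [p0 Ap0 M] := compact_EVT_max A0 cA cf.
move: Ap0; rewrite inE => /inA hp0.
exists p0.1, p0.2; split => // x t hxt.
by apply/RleP; apply: (M (x, t)); rewrite inE; apply/inA.
Qed.

End RectangleEVT.

Definition clamp (a b t : R) : R := Rmax a (Rmin b t).

Lemma clamp_bounds a b t : a <= b -> a <= clamp a b t <= b.
Proof. intros; unfold clamp, Rmax, Rmin; repeat destruct Rle_dec; lra. Qed.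

Lemma clamp_id a b t : a <= t <= b -> clamp a b t = t.
Proof. intros; unfold clamp, Rmax, Rmin; repeat destruct Rle_dec; lra. Qed.

Lemma clamp_contraction a b t t' : Rabs (clamp a b t' - clamp a b t) <= Rabs (t' - t).
Proof.
  intros; unfold clamp, Rmax, Rmin; repeat destruct Rle_dec;
  unfold Rabs; repeat destruct Rcase_abs; lra.
Qed.

(* The standard library's [MVT] asks for [continuity_pt] on the closed interval; precomposing
   with [clamp a b] turns continuity relative to [[a, b]] into that. *)
Lemma cont_on1_MVT (f df : R -> R) a b : a < b ->
  (forall t, a < t < b -> is_derive f t (df t)) -> cont_on1 (fun t => a <= t <= b) f ->
  exists c, a < c < b /\ f b - f a = df c * (b - a).
Proof.
  intros hab hd hc.
  set (g := fun t => f (clamp a b t)).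
  assert (hgd : forall c, a < c < b -> derivable_pt_lim g c (df c)).
  { intros c hc'. apply is_derive_Reals, is_derive_ext_loc with (f := f); [|now apply hd].
    apply locally_interval with (a := Finite a) (b := Finite b); simpl; try lra.
    intros y h1 h2; unfold g; rewrite clamp_id; lra. }
  assert (hcont : forall c, a <= c <= b -> continuity_pt g c).
  { intros c _ eps heps.
    destruct (hc (clamp a b c) (clamp_bounds a b c (Rlt_le _ _ hab)) eps heps) as [del [hdel H]].
    exists del; split; [exact hdel|]. intros x [_ hx]. apply H.
    - apply clamp_bounds; lra.
    - eapply Rle_lt_trans; [apply clamp_contraction|exact hx]. }
  assert (hgd' : forall c, a < c < b -> derivable_pt g c)
    by (intros c h; exists (df c); exact (hgd c h)).
  assert (hid : forall c, a < c < b -> derivable_pt id c) by (intros; apply derivable_pt_id).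
  destruct (MVT id g a b hid hgd' hab) as [c [hcab H]];
    [intros; apply derivable_continuous_pt, derivable_pt_id|exact hcont|].
  exists c; split; [exact hcab|].
  rewrite (derive_pt_eq_0 g c (df c) _ (hgd c hcab)),
    (derive_pt_eq_0 id c 1 _ (derivable_pt_lim_id c)) in H.
  unfold g, id in H. rewrite !clamp_id in H by lra. lra.
Qed.

Lemma cont_on1_increment_bound (f df : R -> R) a b c eps : a <= b ->
  cont_on1 (fun t => a <= t <= b) f ->
  (forall t, a < t < b -> is_derive f t (df t) /\ Rabs (df t - c) <= eps) ->
  Rabs (f b - f a - c * (b - a)) <= eps * (b - a).
Proof.
  intros hab hc hd. destruct (Req_dec a b) as [<-|hne].
  - replace (f a - f a - c * (a - a)) with 0 by ring. rewrite Rabs_R0. lra.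
  - destruct (cont_on1_MVT f df a b) as [t [ht ->]]; [lra|now intros; apply hd|exact hc|].
    replace (df t * (b - a) - c * (b - a)) with ((df t - c) * (b - a)) by ring.
    rewrite Rabs_mult, (Rabs_right (b - a)) by lra.
    apply Rmult_le_compat_r; [lra|apply hd, ht].
Qed.

Lemma cont_on1_increment_bound_abs (f df : R -> R) a b c eps :
  cont_on1 (fun t => Rmin a b <= t <= Rmax a b) f ->
  (forall t, Rmin a b < t < Rmax a b -> is_derive f t (df t) /\ Rabs (df t - c) <= eps) ->
  Rabs (f b - f a - c * (b - a)) <= eps * Rabs (b - a).
Proof.
  intros hc hd. destruct (Rle_dec a b) as [hab|hba].
  - rewrite Rmin_left, Rmax_right in hc, hd by exact hab.
    rewrite (Rabs_right (b - a)) by lra. now apply (cont_on1_increment_bound f df).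
  - rewrite Rmin_right, Rmax_left in hc, hd by lra.
    replace (f b - f a - c * (b - a)) with (- (f a - f b - c * (a - b))) by ring.
    rewrite Rabs_Ropp, (Rabs_minus_sym b a), (Rabs_right (a - b)) by lra.
    apply (cont_on1_increment_bound f df); auto; lra.
Qed.

Lemma derivable_pt_lim_local_max (f : R -> R) c l :
  derivable_pt_lim f c l -> locally c (fun t => f t <= f c) -> l = 0.
Proof.
  intros hd [del hmax].
  rewrite <- (derive_pt_eq_0 f c l (exist _ l hd) hd).
  apply (deriv_maximum f (c - del) (c + del)); try (destruct del; simpl; lra).
  intros t h1 h2. apply hmax. change (Rabs (t - c) < del). apply Rabs_def1; lra.
Qed.

Lemma derivable_pt_lim_increment (f : R -> R) x l :
  derivable_pt_lim f x l <->
  forall eps, 0 < eps -> exists del, 0 < del /\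
    forall h, Rabs h < del -> Rabs (f (x + h) - f x - l * h) <= eps * Rabs h.
Proof.
  split.
  - intros hd eps heps. destruct (hd eps heps) as [del hdel].
    exists del; split; [apply cond_pos|]. intros h hh.
    destruct (Req_dec h 0) as [->|hnz].
    + rewrite Rplus_0_r, Rabs_R0. replace (f x - f x - l * 0) with 0 by ring. rewrite Rabs_R0. lra.
    + replace (f (x + h) - f x - l * h) with (((f (x + h) - f x) / h - l) * h)
        by (field; exact hnz).
      rewrite Rabs_mult. apply Rmult_le_compat_r; [apply Rabs_pos|].
      now apply Rlt_le, hdel.
  - intros hinc eps heps. destruct (hinc (eps / 2)) as [del [hdel H]]; [lra|].
    exists (mkposreal del hdel). intros h hnz hh. simpl in hh.
    assert (hah : 0 < Rabs h) by now apply Rabs_pos_lt.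
    replace ((f (x + h) - f x) / h - l) with ((f (x + h) - f x - l * h) / h) by (field; exact hnz).
    unfold Rdiv. rewrite Rabs_mult, Rabs_inv.
    apply Rmult_lt_reg_r with (Rabs h); [exact hah|].
    rewrite Rmult_assoc, Rinv_l by lra. specialize (H h hh). nra.
Qed.

Lemma derivable_pt_lim_lipschitz (f : R -> R) x s : derivable_pt_lim f x s ->
  exists del, 0 < del /\
    forall t, Rabs (t - x) < del -> Rabs (f t - f x) <= (Rabs s + 1) * Rabs (t - x).
Proof.
  intros hf. destruct (proj1 (derivable_pt_lim_increment f x s) hf 1 Rlt_0_1) as [del [hdel H]].
  exists del; split; [exact hdel|]. intros t ht. specialize (H (t - x) ht).
  replace (x + (t - x)) with t in H by ring.
  replace (f t - f x) with ((f t - f x - s * (t - x)) + s * (t - x)) by ring.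
  eapply Rle_trans; [apply Rabs_triang|]. rewrite Rabs_mult. lra.
Qed.

Lemma cont_on2_continuity_2d S f :
  (forall x y, S x y -> continuity_2d_pt f x y) -> cont_on2 S f.
Proof.
  intros hc x y hs eps heps. destruct (hc x y hs (mkposreal eps heps)) as [del hdel].
  exists del; split; [apply cond_pos|]. intros x' y' _. apply hdel.
Qed.

Lemma cont_on2_comp S T (h f1 f2 : R -> R -> R) :
  cont_on2 T h -> cont_on2 S f1 -> cont_on2 S f2 ->
  (forall x y, S x y -> T (f1 x y) (f2 x y)) ->
  cont_on2 S (fun x y => h (f1 x y) (f2 x y)).
Proof.
  intros hh h1 h2 hST x y hs eps heps.
  destruct (hh _ _ (hST x y hs) eps heps) as [del [hdel H]].
  destruct (h1 x y hs del hdel) as [del1 [hdel1 H1]].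
  destruct (h2 x y hs del hdel) as [del2 [hdel2 H2]].
  exists (Rmin del1 del2); split; [now apply Rmin_glb_lt|].
  intros x' y' hs' hx hy. apply H; [now apply hST| |].
  - apply H1; [exact hs'| |]; eapply Rlt_le_trans; eauto using Rmin_l.
  - apply H2; [exact hs'| |]; eapply Rlt_le_trans; eauto using Rmin_r.
Qed.

Lemma cont_on2_comp1 S (f : R -> R -> R) (k : R -> R) :
  cont_on2 S f -> (forall x y, S x y -> continuity_pt k (f x y)) ->
  cont_on2 S (fun x y => k (f x y)).
Proof.
  intros hf hk.
  apply (cont_on2_comp S (fun a _ => continuity_pt k a) (fun a _ => k a) f f); auto.
  apply cont_on2_continuity_2d. intros a b ha.
  exact (continuity_1d_2d_pt_comp k (fun u _ => u) a b ha (continuity_2d_pt_id1 a b)).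
Qed.

Lemma cont_on2_plus S f g : cont_on2 S f -> cont_on2 S g -> cont_on2 S (fun x y => f x y + g x y).
Proof.
  intros hf hg. apply (cont_on2_comp S (fun _ _ => True) Rplus); auto.
  apply cont_on2_continuity_2d. intros a b _.
  apply continuity_2d_pt_plus; [apply continuity_2d_pt_id1|apply continuity_2d_pt_id2].
Qed.

Lemma cont_on2_minus S f g : cont_on2 S f -> cont_on2 S g -> cont_on2 S (fun x y => f x y - g x y).
Proof.
  intros hf hg. apply (cont_on2_comp S (fun _ _ => True) Rminus); auto.
  apply cont_on2_continuity_2d. intros a b _.
  apply continuity_2d_pt_minus; [apply continuity_2d_pt_id1|apply continuity_2d_pt_id2].
Qed.

Lemma cont_on2_mult S f g : cont_on2 S f -> cont_on2 S g -> cont_on2 S (fun x y => f x y * g x y).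
Proof.
  intros hf hg. apply (cont_on2_comp S (fun _ _ => True) Rmult); auto.
  apply cont_on2_continuity_2d. intros a b _.
  apply continuity_2d_pt_mult; [apply continuity_2d_pt_id1|apply continuity_2d_pt_id2].
Qed.

Lemma cont_on1_vertical (S : R -> R -> Prop) (I : R -> Prop) F x :
  (forall t, I t -> S x t) -> cont_on2 S F -> cont_on1 I (fun t => F x t).
Proof.
  intros hs hc t ht eps heps. destruct (hc x t (hs t ht) eps heps) as [del [hdel H]].
  exists del; split; [exact hdel|]. intros t' ht' htt. apply H; auto.
  unfold Rminus; rewrite Rplus_opp_r, Rabs_R0; exact hdel.
Qed.

Lemma cont_on1_horizontal (S : R -> R -> Prop) (I : R -> Prop) F y :
  (forall t, I t -> S t y) -> cont_on2 S F -> cont_on1 I (fun t => F t y).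
Proof.
  intros hs hc t ht eps heps. destruct (hc t y (hs t ht) eps heps) as [del [hdel H]].
  exists del; split; [exact hdel|]. intros t' ht' htt. apply H; auto.
  unfold Rminus; rewrite Rplus_opp_r, Rabs_R0; exact hdel.
Qed.

Definition half_cell (eta : R -> R) (d L x y : R) : Prop := 0 <= x <= L /\ domc eta d x y.

Lemma dom_near_domc eta d x y del : -d < eta x -> domc eta d x y -> 0 < del ->
  exists y', dom eta d x y' /\ Rabs (y' - y) < del.
Proof.
  intros he [h1 h2] hdel.
  set (mu := Rmin (del / 2) ((eta x + d) / 4)).
  assert (hmu : 0 < mu /\ mu <= del / 2 /\ mu <= (eta x + d) / 4).
  { unfold mu; split; [apply Rmin_glb_lt; lra|split; [apply Rmin_l|apply Rmin_r]]. }
  destruct (Rlt_le_dec y ((eta x - d) / 2)).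
  - exists (y + mu); unfold dom; split; [lra|].
    replace (y + mu - y) with mu by ring. rewrite Rabs_right; lra.
  - exists (y - mu); unfold dom; split; [lra|].
    replace (y - mu - y) with (- mu) by ring. rewrite Rabs_Ropp, Rabs_right; lra.
Qed.

Lemma domc_closed_extension eta d F (C : R -> Prop) :
  (forall x, -d < eta x) -> closed C -> cont_on2 (domc eta d) F ->
  (forall x y, dom eta d x y -> C (F x y)) -> forall x y, domc eta d x y -> C (F x y).
Proof.
  intros he hC hF hdom x y hxy. apply hC. intros [eps heps].
  destruct (hF x y hxy eps (cond_pos eps)) as [del [hdel H]].
  destruct (dom_near_domc eta d x y del (he x) hxy hdel) as [y' [hy' hyy]].
  apply (heps (F x y')), hdom, hy'. apply H; auto; [now unfold dom, domc in *; lra|].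
  unfold Rminus; rewrite Rplus_opp_r, Rabs_R0; exact hdel.
Qed.

Lemma half_cell_max eta d L F : 0 <= L -> (forall x, -d < eta x) ->
  (forall x, continuity_pt eta x) -> cont_on2 (domc eta d) F ->
  exists x0 y0, half_cell eta d L x0 y0 /\
    forall x y, half_cell eta d L x y -> F x y <= F x0 y0.
Proof.
  intros hL he hc hF.
  set (lift x t := -d + t * (eta x + d)).
  assert (hlift : forall x t, 0 <= t <= 1 -> domc eta d x (lift x t)).
  { intros x t ht. specialize (he x). unfold domc, lift; nra. }
  assert (hcont : cont_on2 (fun x t => 0 <= x <= L /\ 0 <= t <= 1) (fun x t => F x (lift x t))).
  { apply (cont_on2_comp _ _ F (fun x _ => x) lift hF).
    - apply cont_on2_continuity_2d; intros; apply continuity_2d_pt_id1.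
    - apply cont_on2_continuity_2d; intros x t _. unfold lift.
      apply continuity_2d_pt_plus; [apply continuity_2d_pt_const|].
      apply continuity_2d_pt_mult; [apply continuity_2d_pt_id2|].
      apply continuity_2d_pt_plus; [|apply continuity_2d_pt_const].
      exact (continuity_1d_2d_pt_comp eta (fun u _ => u) x t (hc x) (continuity_2d_pt_id1 x t)).
    - intros x t [_ ht]. now apply hlift. }
  destruct (RectangleEVT.cont_on2_rect_max 0 L 0 1 _ hL Rle_0_1 hcont)
    as [x0 [t0 [[hx0 ht0] hmax]]].
  exists x0, (lift x0 t0). split; [split; auto|].
  intros x y [hx hy]. specialize (he x). unfold domc in hy.
  replace y with (lift x ((y + d) / (eta x + d))) by (unfold lift; field; lra).
  apply hmax. split; [exact hx|split].
  - apply Rdiv_le_0_compat; lra.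
  - apply Rmult_le_reg_r with (eta x + d); [lra|].
    unfold Rdiv. rewrite Rmult_assoc, Rinv_l; lra.
Qed.

Lemma half_cell_cases eta d L x y : half_cell eta d L x y ->
  (x = 0 \/ x = L \/ y = -d) \/ (0 < x < L /\ dom eta d x y) \/ (0 < x < L /\ y = eta x).
Proof.
  intros [hx [hy1 hy2]].
  destruct (Req_dec x 0) as [|h0]; [now left; left|].
  destruct (Req_dec x L) as [|hL]; [now left; right; left|].
  destruct (Req_dec y (-d)) as [|hd]; [now left; right; right|right].
  destruct (Req_dec y (eta x)) as [|he]; [right|left]; split; try (unfold dom); lra.
Qed.

Lemma half_cell_bound_domc eta d L (h : R -> R -> R) M : 0 < L ->
  (forall x, eta (x + 2 * L) = eta x) -> (forall x, eta (- x) = eta x) ->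
  (forall x y, domc eta d x y -> h (x + 2 * L) y = h x y) ->
  (forall x y, domc eta d x y -> h (- x) y = h x y) ->
  (forall x y, half_cell eta d L x y -> h x y <= M) ->
  forall x y, domc eta d x y -> h x y <= M.
Proof.
  intros hL hper heven hhper hheven hM.
  assert (hfold : forall x y, domc eta d x y -> h x y = h (Rabs x) y /\ domc eta d (Rabs x) y).
  { intros x y hxy. unfold Rabs; destruct Rcase_abs; [|easy].
    unfold domc in *; rewrite heven. split; [symmetry; apply hheven|]; easy. }
  assert (hshift : forall x y, domc eta d x y ->
            h x y = h (x - 2 * L) y /\ domc eta d (x - 2 * L) y).
  { intros x y hxy.
    assert (hxy' : domc eta d (x - 2 * L) y)
      by (unfold domc in *; rewrite <- hper; replace (x - 2 * L + 2 * L) with x by ring; exact hxy).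
    split; [|exact hxy']. rewrite <- (hhper _ _ hxy'). f_equal; ring. }
  assert (hband : forall n x y, 0 <= x <= (2 * INR n + 1) * L -> domc eta d x y -> h x y <= M).
  { induction n as [|n IH]; intros x y hx hxy.
    - apply hM. split; [simpl in hx; lra|exact hxy].
    - destruct (Rle_dec x L) as [hxL|hxL]; [apply hM; split; [lra|exact hxy]|].
      destruct (hshift x y hxy) as [-> hxy'].
      destruct (hfold _ _ hxy') as [-> hxy''].
      rewrite S_INR in hx. assert (hn := pos_INR n).
      apply IH; [|exact hxy'']. split; [apply Rabs_pos|].
      unfold Rabs; destruct Rcase_abs; nra. }
  intros x y hxy. destruct (hfold x y hxy) as [-> hxy'].
  destruct (INR_unbounded (Rabs x / L)) as [n hn].
  apply (hband n); [|exact hxy']. split; [apply Rabs_pos|].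
  assert (hn' := pos_INR n).
  assert (Rabs x < INR n * L).
  { apply Rmult_lt_reg_r with (/ L); [now apply Rinv_0_lt_compat|].
    rewrite Rmult_assoc, Rinv_r by lra. rewrite Rmult_1_r. exact hn. }
  nra.
Qed.

Section GraphDerivative.

Variables (eta : R -> R) (d : R) (F Fx Fy : R -> R -> R).
Hypotheses (F_cont : cont_on2 (domc eta d) F)
  (F_der : forall x y, dom eta d x y ->
     is_derive (fun t => F t y) x (Fx x y) /\ is_derive (fun t => F x t) y (Fy x y)).

Lemma vertical_increment_bound x a b c eps : -d < a <= b -> b <= eta x ->
  (forall t, a < t < b -> Rabs (Fy x t - c) <= eps) ->
  Rabs (F x b - F x a - c * (b - a)) <= eps * (b - a).
Proof.
  intros hab hb hFy. apply (cont_on1_increment_bound (fun t => F x t) (Fy x)); [lra| |].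
  - apply (cont_on1_vertical (domc eta d)); [intros t ht; unfold domc; lra|exact F_cont].
  - intros t ht. split; [apply F_der; unfold dom; lra|now apply hFy].
Qed.

Lemma horizontal_increment_bound y a b c eps : -d < y ->
  (forall t, Rmin a b <= t <= Rmax a b -> y < eta t) ->
  (forall t, Rmin a b < t < Rmax a b -> Rabs (Fx t y - c) <= eps) ->
  Rabs (F b y - F a y - c * (b - a)) <= eps * Rabs (b - a).
Proof.
  intros hy heta hFx. apply (cont_on1_increment_bound_abs (fun t => F t y) (fun t => Fx t y)).
  - apply (cont_on1_horizontal (domc eta d)); [|exact F_cont].
    intros t ht. specialize (heta t ht). unfold domc; lra.
  - intros t ht. split; [apply F_der|now apply hFx].
    specialize (heta t ltac:(lra)). unfold dom; lra.
Qed.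

(* Between [x1] and [x1 + h], go from the graph down to height [eta x1 - k], across, and back
   up to the graph: all three segments stay below the graph, where the mean value theorem
   applies. *)
Lemma graph_increment_bound x1 h k a b eps : 0 <= eps -> Rabs h <= k -> -d < eta x1 - k ->
  (forall t, Rmin x1 (x1 + h) <= t <= Rmax x1 (x1 + h) -> Rabs (eta t - eta x1) < k) ->
  (forall t y, Rabs (t - x1) <= k -> Rabs (y - eta x1) <= k -> domc eta d t y ->
     Rabs (Fx t y - a) <= eps /\ Rabs (Fy t y - b) <= eps) ->
  Rabs (F (x1 + h) (eta (x1 + h)) - F x1 (eta x1) - a * h - b * (eta (x1 + h) - eta x1))
    <= eps * (3 * k + Rabs h).
Proof.
  intros heps hhk hbot hgraph hbox.
  set (e1 := eta x1) in *; set (e3 := eta (x1 + h)); set (y0 := e1 - k).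
  assert (hbetween : forall t, Rmin x1 (x1 + h) <= t <= Rmax x1 (x1 + h) ->
            Rabs (t - x1) <= Rabs h /\ y0 < eta t).
  { intros t ht. split.
    - rewrite Rmin_comm, Rmax_comm in ht. apply Rabs_le_between_min_max in ht.
      now replace (x1 + h - x1) with h in ht by ring.
    - apply hgraph, Rabs_lt_between in ht. unfold y0; lra. }
  assert (he3 : Rabs (e3 - e1) < k).
  { apply hgraph. unfold Rmin, Rmax; destruct Rle_dec; lra. }
  apply Rabs_lt_between in he3.
  assert (V1 : Rabs (F x1 e1 - F x1 y0 - b * (e1 - y0)) <= eps * (e1 - y0)).
  { apply vertical_increment_bound; [unfold y0; lra|unfold e1; lra|].
    intros t ht. apply hbox; [|apply Rabs_le_between; unfold y0 in *; lra|].
    - unfold Rminus; rewrite Rplus_opp_r, Rabs_R0; lra.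
    - unfold domc, y0, e1 in *; lra. }
  assert (V3 : Rabs (F (x1 + h) e3 - F (x1 + h) y0 - b * (e3 - y0)) <= eps * (e3 - y0)).
  { apply vertical_increment_bound; [unfold y0; lra|unfold e3; lra|].
    intros t ht. apply hbox; [|apply Rabs_le_between; unfold y0 in *; lra|].
    - replace (x1 + h - x1) with h by ring. lra.
    - unfold domc, y0, e3 in *; lra. }
  assert (V2 : Rabs (F (x1 + h) y0 - F x1 y0 - a * (x1 + h - x1)) <= eps * Rabs (x1 + h - x1)).
  { apply horizontal_increment_bound; [unfold y0; lra|now intros t ht; apply hbetween|].
    intros t ht. assert (ht' := hbetween t ltac:(lra)).
    apply hbox; [lra|apply Rabs_le_between; unfold y0; lra|unfold domc, y0 in *; lra]. }
  replace (x1 + h - x1) with h in V2 by ring.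
  replace (F (x1 + h) e3 - F x1 e1 - a * h - b * (e3 - e1)) with
    ((F (x1 + h) e3 - F (x1 + h) y0 - b * (e3 - y0)) + (F (x1 + h) y0 - F x1 y0 - a * h)
     - (F x1 e1 - F x1 y0 - b * (e1 - y0))) by (unfold y0; ring).
  apply Rabs_le_between in V1, V2, V3. apply Rabs_le_between.
  assert (eps * (e3 - y0) <= eps * (2 * k)) by (apply Rmult_le_compat_l; unfold y0; lra).
  unfold y0 in *. nra.
Qed.

Variables (x1 s : R).
Hypotheses (eta_gt : forall x, -d < eta x) (eta_der : derivable_pt_lim eta x1 s)
  (Fx_cont : cont_on2 (domc eta d) Fx) (Fy_cont : cont_on2 (domc eta d) Fy).

Lemma derivable_pt_lim_graph :
  derivable_pt_lim (fun x => F x (eta x)) x1 (Fx x1 (eta x1) + s * Fy x1 (eta x1)).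
Proof.
  set (e1 := eta x1); set (a := Fx x1 e1); set (b := Fy x1 e1); set (K := Rabs s + 2).
  assert (he1 : 0 < e1 + d) by (unfold e1; specialize (eta_gt x1); lra).
  assert (hp : domc eta d x1 e1) by (split; [lra|apply Rle_refl]).
  apply derivable_pt_lim_increment. intros eps heps.
  set (eps' := eps / (3 * K + Rabs b + 1)).
  assert (heps' : 0 < eps' /\ eps' * (3 * K + Rabs b + 1) = eps).
  { generalize (Rabs_pos b) (Rabs_pos s); intros. unfold eps', K.
    split; [apply Rdiv_lt_0_compat|field]; lra. }
  destruct heps' as [heps'0 heps'1].
  destruct (Fx_cont x1 e1 hp eps' heps'0) as [dx [hdx Hx]].
  destruct (Fy_cont x1 e1 hp eps' heps'0) as [dy [hdy Hy]].
  destruct (derivable_pt_lim_lipschitz eta x1 s eta_der) as [d1 [hd1 H1]].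
  destruct (proj1 (derivable_pt_lim_increment eta x1 s) eta_der eps' heps'0) as [d2 [hd2 H2]].
  set (r := Rmin (Rmin dx dy) (e1 + d)).
  assert (hr : 0 < r /\ r <= dx /\ r <= dy /\ r <= e1 + d).
  { unfold r. generalize (Rmin_l dx dy) (Rmin_r dx dy) (Rmin_l (Rmin dx dy) (e1 + d))
      (Rmin_r (Rmin dx dy) (e1 + d)); intros.
    repeat split; try lra. repeat apply Rmin_glb_lt; lra. }
  destruct hr as [hr0 [hrx [hry hrd]]].
  assert (hK : 2 <= K) by (unfold K; generalize (Rabs_pos s); lra).
  exists (Rmin (Rmin d1 d2) (r / K)). split.
  { repeat apply Rmin_glb_lt; try lra. apply Rdiv_lt_0_compat; lra. }
  intros h hh. fold e1. destruct (Req_dec h 0) as [->|hnz].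
  { rewrite Rplus_0_r, Rabs_R0. fold e1.
    replace (F x1 e1 - F x1 e1 - (a + s * b) * 0) with 0 by ring. rewrite Rabs_R0; lra. }
  assert (hah : 0 < Rabs h) by now apply Rabs_pos_lt.
  generalize (Rmin_l (Rmin d1 d2) (r / K)) (Rmin_r (Rmin d1 d2) (r / K))
    (Rmin_l d1 d2) (Rmin_r d1 d2); intros.
  assert (hkr : K * Rabs h < r).
  { apply Rmult_lt_reg_r with (/ K); [apply Rinv_0_lt_compat; lra|].
    replace (K * Rabs h * / K) with (Rabs h) by (field; lra). fold (r / K). lra. }
  assert (hinc : Rabs (F (x1 + h) (eta (x1 + h)) - F x1 e1 - a * h - b * (eta (x1 + h) - e1))
                   <= eps' * (3 * (K * Rabs h) + Rabs h)).
  { apply graph_increment_bound; fold e1; [lra|nra|lra| |].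
    - intros t ht. rewrite Rmin_comm, Rmax_comm in ht. apply Rabs_le_between_min_max in ht.
      replace (x1 + h - x1) with h in ht by ring.
      eapply Rle_lt_trans; [apply H1; lra|].
      apply Rle_lt_trans with ((Rabs s + 1) * Rabs h); [|unfold K in *; nra].
      apply Rmult_le_compat_l; [generalize (Rabs_pos s); lra|exact ht].
    - intros t y ht hy hty. split; apply Rlt_le; [apply Hx|apply Hy]; auto; lra. }
  assert (Vb : Rabs (b * (eta (x1 + h) - e1 - s * h)) <= Rabs b * (eps' * Rabs h))
    by (rewrite Rabs_mult; apply Rmult_le_compat_l; [apply Rabs_pos|exact (H2 h ltac:(lra))]).
  replace (F (x1 + h) (eta (x1 + h)) - F x1 e1 - (a + s * b) * h) with
    ((F (x1 + h) (eta (x1 + h)) - F x1 e1 - a * h - b * (eta (x1 + h) - e1))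
     + b * (eta (x1 + h) - e1 - s * h)) by ring.
  eapply Rle_trans; [apply Rabs_triang|]. rewrite <- heps'1. nra.
Qed.

End GraphDerivative.

Lemma surface_flow_sum_neg (g u0 v0 ux uy vx vy Px Py s : R) :
  0 < g -> u0 < 0 -> ux < 0 -> vx - uy <= 0 -> v0 = s * u0 ->
  ux + vy = 0 -> u0 * ux + v0 * uy + Px = 0 -> u0 * vx + v0 * vy + Py = - g ->
  Px + s * Py = 0 -> ux + s * uy + (vx + s * vy) = 0 -> u0 + v0 < 0.
Proof.
  intros hg hu hux hvort -> hinc he1 he2 hbern hcrit.
  assert (hvy : vy = - ux) by lra. subst vy.
  assert (hvx : vx = - ux * (1 - s) - s * uy) by lra. subst vx.
  (* the Euler equations and Bernoulli's law [Px + s Py = 0] eliminate the pressure *)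
  assert (hkey : u0 * ((1 - s) * (ux + s * uy)) + s * g = 0) by nra.
  destruct (Rlt_le_dec (-1) s) as [hs|hs].
  { assert (0 < - u0 * (1 + s)) by (apply Rmult_lt_0_compat; lra). lra. }
  assert (hw : ux + s * uy < 0).
  { assert (0 < - u0 * (1 - s)) by (apply Rmult_lt_0_compat; lra).
    assert (s * g < 0) by nra. nra. }
  nra.
Qed.

Lemma Rabs_div_lt_1 a b : 0 <= a -> b < 0 -> a + b < 0 -> Rabs (a / b) < 1.
Proof.
  intros ha hb hab. unfold Rdiv. rewrite Rabs_mult, Rabs_inv, (Rabs_right a), (Rabs_left b) by lra.
  apply Rmult_lt_reg_r with (- b); [lra|].
  rewrite Rmult_assoc, Rinv_l, Rmult_1_r, Rmult_1_l by lra. lra.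
Qed.

Lemma Ck_cl_cont n D Dc F : Ck_cl n D Dc F -> cont_on2 Dc F.
Proof. destruct n; apply proj1. Qed.

Lemma Ck_cl_partials n D Dc F : Ck_cl (S n) D Dc F ->
  exists Fx Fy, cont_on2 Dc Fx /\ cont_on2 Dc Fy /\
    forall x y, D x y ->
      is_derive (fun t => F t y) x (Fx x y) /\ is_derive (fun t => F x t) y (Fy x y).
Proof.
  intros [_ [hd [Fx [Fy [he [hx hy]]]]]].
  exists Fx, Fy. split; [exact (Ck_cl_cont _ _ _ _ hx)|split; [exact (Ck_cl_cont _ _ _ _ hy)|]].
  intros x y hxy. destruct (hd x y hxy) as [h1 h2]. destruct (he x y hxy) as [-> ->].
  split; apply Derive_correct; assumption.
Qed.

Section Wave.

Context {g L Patm : R} {u v P : R -> R -> R} {eta : R -> R} {d : R}.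
Hypothesis wave : is_wave g L Patm u v P eta d.

Lemma wave_eta_gt x : -d < eta x.
Proof. destruct wave as (_ & H & _). apply H. Qed.

Lemma wave_eta_continuity x : continuity_pt eta x.
Proof.
  destruct wave as (_ & _ & H & _).
  apply continuity_pt_filterlim, (H 0%nat (Nat.le_0_l 4) x).
Qed.

Lemma wave_eta_derivable x : derivable_pt_lim eta x (Derive eta x).
Proof.
  destruct wave as (_ & _ & H & _).
  apply is_derive_Reals, Derive_correct, (H 1%nat ltac:(lia) x).
Qed.

Lemma wave_u_neg x y : domc eta d x y -> u x y < 0.
Proof.
  destruct wave as (_ & _ & _ & _ & _ & _ & hu & _ & _ & _ & _ & _ & _ & _ & [c [hc huc]] & _).
  intros hxy. apply Rle_lt_trans with c; [|exact hc].
  apply (domc_closed_extension eta d u (fun z => z <= c) wave_eta_gt (closed_le c)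
    (Ck_cl_cont _ _ _ _ hu) huc x y hxy).
Qed.

Lemma wave_ratio_cont : cont_on2 (domc eta d) (fun x y => Rabs (v x y / u x y)).
Proof.
  destruct wave as (_ & _ & _ & _ & _ & _ & hu & hv & _).
  apply (cont_on2_comp1 _ _ Rabs); [|intros; apply Rcontinuity_abs].
  apply cont_on2_mult; [exact (Ck_cl_cont _ _ _ _ hv)|].
  apply (cont_on2_comp1 _ _ Rinv); [exact (Ck_cl_cont _ _ _ _ hu)|].
  intros x y hxy. apply continuity_pt_filterlim, continuous_Rinv.
  apply Rlt_not_eq, wave_u_neg, hxy.
Qed.

Lemma wave_ratio_periodic x y : domc eta d x y ->
  Rabs (v (x + 2 * L) y / u (x + 2 * L) y) = Rabs (v x y / u x y).
Proof.
  destruct wave as (_ & _ & _ & _ & _ & _ & _ & _ & _ & hper & _).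
  intros hxy. now destruct (hper x y hxy) as [-> [-> _]].
Qed.

Lemma wave_ratio_even x y : domc eta d x y -> Rabs (v (- x) y / u (- x) y) = Rabs (v x y / u x y).
Proof.
  destruct wave as (_ & _ & _ & _ & _ & _ & _ & _ & _ & _ & heven & _).
  intros hxy. destruct (heven x y hxy) as [-> [_ ->]].
  unfold Rdiv. now rewrite Ropp_mult_distr_l_reverse, Rabs_Ropp.
Qed.

Lemma wave_v_half_cell_boundary x y : half_cell eta d L x y -> x = 0 \/ x = L \/ y = -d ->
  v x y = 0.
Proof.
  destruct wave as (_ & _ & _ & _ & _ & heta & _ & _ & _ & hper & heven & _ & _ & hbot & _).
  intros [_ hxy] [-> | [-> | ->]]; [| |apply hbot].
  - destruct (heven 0 y hxy) as [_ [_ H]]. rewrite Ropp_0 in H. lra.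
  - assert (hxy' : domc eta d (- L) y) by (unfold domc in *; rewrite heta; exact hxy).
    destruct (hper (- L) y hxy') as [_ [H1 _]]. replace (- L + 2 * L) with L in H1 by ring.
    destruct (heven L y hxy) as [_ [_ H2]]. lra.
Qed.

Lemma wave_v_nonneg : monotone_wave L v eta d \/ trivial_wave u v P eta d ->
  forall x y, half_cell eta d L x y -> 0 <= v x y.
Proof.
  intros [hmono | [heta_triv htriv]] x y hxy.
  - destruct (half_cell_cases eta d L x y hxy) as [hb | [[hx [hy1 hy2]] | [hx ->]]].
    + rewrite (wave_v_half_cell_boundary x y hxy hb). apply Rle_refl.
    + apply Rlt_le, hmono; lra.
    + apply Rlt_le, hmono; [exact hx|split; [apply wave_eta_gt|apply Rle_refl]].
  - destruct wave as (_ & _ & _ & _ & _ & _ & _ & _ & _ & _ & heven & _).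
    destruct hxy as [_ hxy].
    assert (hxy' : domc eta d (- x) y)
      by (unfold domc in *; rewrite (heta_triv (- x) x); exact hxy).
    destruct (htriv x (- x) y hxy hxy') as [_ [H1 _]]. destruct (heven x y hxy) as [_ [_ H2]].
    lra.
Qed.

Lemma wave_vorticity_nonpos x y : dom eta d x y -> px v x y - py u x y <= 0.
Proof.
  destruct wave as (_ & _ & _ & _ & _ & _ & _ & _ & _ & _ & _ & _ & _ & _ & _ &
    psi & m & gam & _ & hpsi & hpsid & hpsib & _ & hvort & hgam).
  intros hxy. rewrite hvort by exact hxy.
  assert (hpsi_range : 0 < psi x y < m).
  { destruct (hpsib x) as [htop hbottom]. destruct hxy as [h1 h2].
    assert (hseg : forall a b, -d <= a < b -> b <= eta x ->
              psi x b < psi x a).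
    { intros a b hab hb.
      destruct (cont_on1_MVT (fun t => psi x t) (fun t => u x t) a b) as [c [hc hmvt]]; [lra| | |].
      - intros t ht. apply hpsid. unfold dom; lra.
      - apply (cont_on1_vertical (domc eta d)); [intros t ht; unfold domc; lra|exact hpsi].
      - assert (u x c < 0) by (apply wave_u_neg; unfold domc; lra). simpl in hmvt. nra. }
    rewrite <- htop, <- hbottom. split; apply hseg; lra. }
  apply hgam, hpsi_range.
Qed.

Variable ux : R -> R -> R.
Hypotheses (ux_cont : cont_on2 (domc eta d) ux)
  (ux_px : forall x y, dom eta d x y -> ux x y = px u x y)
  (ux_neg : forall x y, 0 < x < L -> -d < y <= eta x -> ux x y < 0).

Section Partials.

Variables (Uy Vx Vy Px Py : R -> R -> R).
Hypotheses (Uy_cont : cont_on2 (domc eta d) Uy) (Vx_cont : cont_on2 (domc eta d) Vx)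
  (Vy_cont : cont_on2 (domc eta d) Vy) (Px_cont : cont_on2 (domc eta d) Px)
  (Py_cont : cont_on2 (domc eta d) Py)
  (u_der : forall x y, dom eta d x y ->
     is_derive (fun t => u t y) x (ux x y) /\ is_derive (fun t => u x t) y (Uy x y))
  (v_der : forall x y, dom eta d x y ->
     is_derive (fun t => v t y) x (Vx x y) /\ is_derive (fun t => v x t) y (Vy x y))
  (P_der : forall x y, dom eta d x y ->
     is_derive (fun t => P t y) x (Px x y) /\ is_derive (fun t => P x t) y (Py x y)).

Lemma wave_partials x y : dom eta d x y ->
  px u x y = ux x y /\ py u x y = Uy x y /\ px v x y = Vx x y /\ py v x y = Vy x y /\
  px P x y = Px x y /\ py P x y = Py x y.
Proof.
  intros hxy. unfold px, py. destruct (u_der x y hxy) as [hux huy].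
  destruct (v_der x y hxy) as [hvx hvy]. destruct (P_der x y hxy) as [hPx hPy].
  repeat split; apply is_derive_unique; auto.
Qed.

Lemma wave_equations_dom x y : dom eta d x y ->
  ux x y + Vy x y = 0 /\ u x y * ux x y + v x y * Uy x y + Px x y = 0 /\
  u x y * Vx x y + v x y * Vy x y + Py x y = - g /\ Vx x y - Uy x y <= 0.
Proof.
  intros hxy. assert (hvort := wave_vorticity_nonpos x y hxy).
  destruct wave as (_ & _ & _ & _ & _ & _ & _ & _ & _ & _ & _ & heul & _).
  destruct (heul x y hxy) as (he1 & he2 & hinc).
  destruct (wave_partials x y hxy) as (-> & -> & -> & -> & -> & ->) in he1, he2, hinc, hvort.
  repeat split; lra.
Qed.

Lemma wave_equations_domc x y : domc eta d x y ->
  ux x y + Vy x y = 0 /\ u x y * ux x y + v x y * Uy x y + Px x y = 0 /\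
  u x y * Vx x y + v x y * Vy x y + Py x y = - g /\ Vx x y - Uy x y <= 0.
Proof.
  destruct wave as (_ & _ & _ & _ & _ & _ & hu & hv & _).
  assert (hu' := Ck_cl_cont _ _ _ _ hu). assert (hv' := Ck_cl_cont _ _ _ _ hv).
  intros hxy. repeat split.
  - apply (domc_closed_extension eta d (fun x y => ux x y + Vy x y) (fun z => z = 0));
      auto using wave_eta_gt, closed_eq, cont_on2_plus.
    intros x' y' h'. apply (wave_equations_dom x' y' h').
  - apply (domc_closed_extension eta d
      (fun x y => u x y * ux x y + v x y * Uy x y + Px x y) (fun z => z = 0));
      auto using wave_eta_gt, closed_eq, cont_on2_plus, cont_on2_mult.
    intros x' y' h'. apply (wave_equations_dom x' y' h').
  - apply (domc_closed_extension eta d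
      (fun x y => u x y * Vx x y + v x y * Vy x y + Py x y) (fun z => z = - g));
      auto using wave_eta_gt, closed_eq, cont_on2_plus, cont_on2_mult.
    intros x' y' h'. apply (wave_equations_dom x' y' h').
  - apply (domc_closed_extension eta d (fun x y => Vx x y - Uy x y) (fun z => z <= 0));
      auto using wave_eta_gt, closed_le, cont_on2_minus.
    intros x' y' h'. apply (wave_equations_dom x' y' h').
Qed.

Lemma interior_max_absurd x1 y1 : 0 < x1 < L -> dom eta d x1 y1 ->
  (forall x y, half_cell eta d L x y -> u x y + v x y <= u x1 y1 + v x1 y1) -> False.
Proof.
  intros hx1 hp hmax.
  destruct (u_der x1 y1 hp) as [hux huy]. destruct (v_der x1 y1 hp) as [hvx hvy].
  assert (hcx : ux x1 y1 + Vx x1 y1 = 0).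
  { apply (derivable_pt_lim_local_max (fun t => u t y1 + v t y1) x1).
    - apply derivable_pt_lim_plus; apply is_derive_Reals; assumption.
    - apply (filter_imp (fun t => y1 < eta t /\ 0 < t < L)).
      + intros t [hte htL]. apply hmax. destruct hp. split; unfold domc; lra.
      + apply filter_and.
        * apply (proj1 (continuity_pt_filterlim eta x1) (wave_eta_continuity x1)).
          apply open_gt, hp.
        * apply (open_and _ _ (open_gt 0) (open_lt L)), hx1. }
  assert (hcy : Uy x1 y1 + Vy x1 y1 = 0).
  { apply (derivable_pt_lim_local_max (fun t => u x1 t + v x1 t) y1).
    - apply derivable_pt_lim_plus; apply is_derive_Reals; auto.
    - apply (filter_imp (fun t => -d < t < eta x1)).
      + intros t ht. apply hmax. split; [lra|unfold domc; lra].
      + apply (open_and _ _ (open_gt (- d)) (open_lt (eta x1))). exact hp. }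
  destruct (wave_equations_domc x1 y1) as (hinc & _ & _ & hvort);
    [destruct hp; unfold domc; lra|].
  assert (hneg : ux x1 y1 < 0) by (destruct hp; apply ux_neg; lra).
  lra.
Qed.

Lemma surface_max_neg x1 : 0 < g -> 0 < x1 < L ->
  (forall x y, half_cell eta d L x y -> u x y + v x y <= u x1 (eta x1) + v x1 (eta x1)) ->
  u x1 (eta x1) + v x1 (eta x1) < 0.
Proof.
  intros hg hx1 hmax.
  destruct wave as (_ & _ & _ & _ & _ & _ & hu & hv & hP & _ & _ & _ & hsurf & _).
  assert (hu' := Ck_cl_cont _ _ _ _ hu). assert (hv' := Ck_cl_cont _ _ _ _ hv).
  assert (hP' := Ck_cl_cont _ _ _ _ hP).
  set (s := Derive eta x1).
  assert (hgraph : forall F Fx Fy, cont_on2 (domc eta d) F -> cont_on2 (domc eta d) Fx ->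
            cont_on2 (domc eta d) Fy ->
            (forall x y, dom eta d x y ->
               is_derive (fun t => F t y) x (Fx x y) /\ is_derive (fun t => F x t) y (Fy x y)) ->
            derivable_pt_lim (fun x => F x (eta x)) x1 (Fx x1 (eta x1) + s * Fy x1 (eta x1))).
  { intros. apply (derivable_pt_lim_graph eta d); auto using wave_eta_gt, wave_eta_derivable. }
  assert (hcrit : ux x1 (eta x1) + s * Uy x1 (eta x1) + (Vx x1 (eta x1) + s * Vy x1 (eta x1)) = 0).
  { apply (derivable_pt_lim_local_max (fun x => u x (eta x) + v x (eta x)) x1).
    - apply derivable_pt_lim_plus; apply hgraph; auto.
    - apply (filter_imp (fun t => 0 < t < L)).
      + intros t ht. apply hmax. split; [lra|split; [apply Rlt_le, wave_eta_gt|apply Rle_refl]].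
      + apply (open_and _ _ (open_gt 0) (open_lt L)), hx1. }
  assert (hbern : Px x1 (eta x1) + s * Py x1 (eta x1) = 0).
  { apply (uniqueness_limite (fun x => P x (eta x)) x1); [apply hgraph; auto|].
    apply is_derive_Reals, (is_derive_ext (fun _ => Patm)); [intros t; symmetry; apply hsurf|].
    exact (is_derive_const Patm x1). }
  assert (hp : domc eta d x1 (eta x1)) by (split; [apply Rlt_le, wave_eta_gt|apply Rle_refl]).
  destruct (wave_equations_domc x1 (eta x1) hp) as (hinc & he1 & he2 & hvort).
  apply (surface_flow_sum_neg g _ _ (ux x1 (eta x1)) (Uy x1 (eta x1)) (Vx x1 (eta x1))
    (Vy x1 (eta x1)) (Px x1 (eta x1)) (Py x1 (eta x1)) s); auto.
  - apply wave_u_neg, hp.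
  - apply ux_neg; [exact hx1|split; [apply wave_eta_gt|apply Rle_refl]].
  - apply hsurf.
Qed.

End Partials.

Lemma wave_sum_neg : 0 < g -> 0 < L -> forall x y, half_cell eta d L x y -> u x y + v x y < 0.
Proof.
  intros hg hL.
  destruct wave as (_ & _ & _ & _ & _ & _ & hu & hv & hP & _).
  destruct (Ck_cl_partials _ _ _ _ hu) as [Ux [Uy [_ [hUy hUd]]]].
  destruct (Ck_cl_partials _ _ _ _ hv) as [Vx [Vy [hVx [hVy hVd]]]].
  destruct (Ck_cl_partials _ _ _ _ hP) as [Px [Py [hPx [hPy hPd]]]].
  assert (hud : forall x y, dom eta d x y ->
            is_derive (fun t => u t y) x (ux x y) /\ is_derive (fun t => u x t) y (Uy x y)).
  { intros x y hxy. destruct (hUd x y hxy) as [h1 h2]. split; [|exact h2].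
    rewrite ux_px by exact hxy. replace (px u x y) with (Ux x y); [exact h1|].
    symmetry. apply is_derive_unique, h1. }
  destruct (half_cell_max eta d L (fun x y => u x y + v x y)) as [x1 [y1 [hp hmax]]];
    [lra|exact wave_eta_gt|exact wave_eta_continuity|
     apply cont_on2_plus; eapply Ck_cl_cont; eassumption|].
  enough (u x1 y1 + v x1 y1 < 0) by (intros x y hxy; specialize (hmax x y hxy); lra).
  destruct (half_cell_cases eta d L x1 y1 hp) as [hb | [[hx hin] | [hx ->]]].
  - rewrite (wave_v_half_cell_boundary x1 y1 hp hb), Rplus_0_r. apply wave_u_neg, hp.
  - exfalso. now apply (interior_max_absurd Uy Vx Vy Px Py) with x1 y1.
  - now apply (surface_max_neg Uy Vx Vy Px Py).
Qed.

End Wave.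

Theorem lemma2p3 (g L Patm : R) (u v P : R -> R -> R) (eta : R -> R) (d : R) :
  0 < g -> 0 < L ->
  in_W g L Patm u v P eta d ->
  (exists ux : R -> R -> R,
     cont_on2 (domc eta d) ux /\
     (forall x y, dom eta d x y -> ux x y = px u x y) /\
     (forall x y, 0 < x < L -> -d < y <= eta x -> ux x y < 0)) ->
  exists x0 y0, domc eta d x0 y0 /\
    Rabs (v x0 y0 / u x0 y0) < 1 /\
    (forall x y, domc eta d x y -> Rabs (v x y / u x y) <= Rabs (v x0 y0 / u x0 y0)).
Proof.
  intros hg hL [hwave hclass] [ux [hux_cont [hux_px hux_neg]]].
  destruct (half_cell_max eta d L (fun x y => Rabs (v x y / u x y))) as [x0 [y0 [hp hmax]]];
    [lra|exact (wave_eta_gt hwave)|exact (wave_eta_continuity hwave)|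
     exact (wave_ratio_cont hwave)|].
  exists x0, y0. split; [apply hp|split].
  - apply Rabs_div_lt_1;
      [exact (wave_v_nonneg hwave hclass x0 y0 hp)|apply (wave_u_neg hwave), hp|].
    rewrite Rplus_comm. exact (wave_sum_neg hwave ux hux_cont hux_px hux_neg hg hL x0 y0 hp).
  - pose proof hwave as (_ & _ & _ & heta_per & _ & heta_even & _).
    apply (half_cell_bound_domc eta d L); [exact hL|exact heta_per|exact heta_even|
      exact (wave_ratio_periodic hwave)|exact (wave_ratio_even hwave)|exact hmax].
Qed.
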